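(* Let $d\geq1$ be an integer. Let $a_{i,j}$ ($0\leq i,j\leq d$, $i\neq j$) be complex numbers satisfying $a_{i,j}=a_{j,i}$ for all $i\neq j$, \[ g(a_{i,j},a_{j,k},a_{i,k})=0\quad\text{for all pairwise distinct } i,j,k, \] \[ h(a_{i,j},a_{i,k},a_{i,\ell},a_{j,k},a_{j,\ell},a_{k,\ell})=0\quad\text{for all pairwise distinct } i,j,k,\ell. \] Assume that $a_{i_0,i_1}\neq\pm2$ for some $i_0,i_1$ with $0\leq i_0<i_1\leq d$, and let $w_{i_0},w_{i_1}$ be nonzero complex numbers with $\frac{w_{i_0}}{w_{i_1}}+\frac{w_{i_1}}{w_{i_0}}=a_{i_0,i_1}$. Then for complex numbers $w_i$ ($0\leq i\leq d$, $i\neq i_0,i_1$) the following are equivalent: (i) for all $i,j$ with $0\leq i,j\leq d$ and $i\neq j$, $\frac{w_j}{w_i}+\frac{w_i}{w_j}=a_{i,j}$; (ii) for all $i$ with $0\leq i\leq d$, $i\neq i_0,i_1$, \[ w_i=\frac{w_{i_1}^2-w_{i_0}^2}{a_{i_1,i}w_{i_1}-a_{i_0,i}w_{i_0}}. \] Moreover, if one of the two equivalent conditions holds, all $a_{i,j}$ ($0\leq i<j\leq d$) are real, and $-2<a_{i_0,i_1}<2$, then $|w_i|=|w_j|$ for all $0\leq i<j\leq d$.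
   Context: Here $g(X,Y,Z)=X^2+Y^2+Z^2-XYZ-4$ and \[ h(X_{0,1},X_{0,2},X_{0,3},X_{1,2},X_{1,3},X_{2,3})=\det\begin{bmatrix}2&X_{0,1}&X_{0,2}\\ X_{0,1}&2&X_{1,2}\\ X_{0,3}&X_{1,3}&X_{2,3}\end{bmatrix}. \] *)

From HB Require Import structures.
From mathcomp Require Import all_boot all_order all_algebra.
From mathcomp Require Import complex.
From mathcomp Require Import reals.
Set Implicit Arguments. Unset Strict Implicit. Unset Printing Implicit Defensive.
Import Order.TTheory GRing.Theory Num.Theory.
Local Open Scope ring_scope.

Definition g {R : comRingType} (X Y Z : R) : R :=
  X ^+ 2 + Y ^+ 2 + Z ^+ 2 - X * Y * Z - 4.

Definition hmx {R : comRingType} (X01 X02 X03 X12 X13 X23 : R) : 'M[R]_3 :=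
  \matrix_(i < 3, j < 3)
    nth 0 (nth [::] [:: [:: 2; X01; X02]; [:: X01; 2; X12]; [:: X03; X13; X23]] i) j.

Definition h {R : comRingType} (X01 X02 X03 X12 X13 X23 : R) : R :=
  \det (hmx X01 X02 X03 X12 X13 X23).

From HB Require Import structures.
From mathcomp Require Import all_boot all_order all_algebra.
From mathcomp Require Import complex.
From mathcomp Require Import reals.
From mathcomp Require Import ring.
Import Order.TTheory GRing.Theory Num.Theory.
Local Open Scope ring_scope.

(** If the [w i] realise the [a i j], then
   [w i (a i1 i w i1 - a i0 i w i0) = w i1^2 - w i0^2], which is (ii).
   Conversely, given (ii), [g (rsum x y) b c] is up to a nonzero factor the
   quadratic whose vanishing says [rsum (w i) (w i0) = a i0 i], so [g = 0]
   gives back the ratio sums with [w i0] and [w i1].  For two further indices,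
   [h] vanishes on the ratio sums of any four nonzero numbers and is affine in
   its last argument with slope [4 - a i0 i1^2 <> 0], so [h = 0] forces
   [rsum (w i) (w j) = a i j].
   For the moduli: if [u + 1/u] is real then [u] is real or [|u| = 1], and a
   nonzero real [u] has [u + 1/u] outside [(-2, 2)].  Hence [|w i0| = |w i1|],
   and every other [w k] has modulus [|w i0|] or [|w i1|], because [w k / w i0]
   and [w k / w i1] cannot both be real: their quotient [w i1 / w i0] is not. *)

Definition rsum {F : fieldType} (x y : F) : F := x / y + y / x.

Lemma rsumC (F : fieldType) (x y : F) : rsum x y = rsum y x.
Proof. exact: addrC. Qed.

Lemma hE (R : comNzRingType) (X01 X02 X03 X12 X13 X23 : R) :
  h X01 X02 X03 X12 X13 X23 =
  X23 * (4 - X01 ^+ 2) - (2 * X12 * X13 + 2 * X02 * X03 - X01 * (X02 * X13 + X12 * X03)).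
Proof.
rewrite /h (expand_det_row _ ord0) !big_ord_recr big_ord0 /=.
rewrite /cofactor !(expand_det_row _ ord0) !big_ord_recr big_ord0 /=.
rewrite /cofactor !det_mx11 !mxE /= /bump /= !big_ord0.
ring.
Qed.

Section RatioSums.
Context {F : fieldType}.
Implicit Types x y z b c : F.

Lemma sqr_sub_neq0_of_rsum x y : x != 0 -> y != 0 ->
  rsum x y != 2 -> rsum x y != -2 -> y ^+ 2 - x ^+ 2 != 0.
Proof.
move=> x0 y0 ne2 neN2; apply: contraNneq ne2 => /eqP.
rewrite subr_sqr mulf_eq0 subr_eq0 addr_eq0 => /orP[]/eqP y_eq.
  by rewrite /rsum y_eq divff.
by move: neN2; rewrite /rsum y_eq invrN mulrN mulNr divff // -opprD eqxx.
Qed.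

Lemma formula_of_rsum x y z b c : x != 0 -> y != 0 -> z != 0 ->
  y ^+ 2 - x ^+ 2 != 0 -> rsum z x = c -> rsum z y = b ->
  b * y - c * x != 0 /\ z = (y ^+ 2 - x ^+ 2) / (b * y - c * x).
Proof.
move=> x0 y0 z0 sqr0 zx zy.
have zE : z * (b * y - c * x) = y ^+ 2 - x ^+ 2.
  by rewrite -zx -zy /rsum; field; apply/and3P.
have den0 : b * y - c * x != 0 by apply: contraNneq sqr0 => den0; rewrite -zE den0 mulr0.
by split; rewrite // -zE mulfK.
Qed.

Lemma rsum_of_formula x y z b c : x != 0 -> y != 0 ->
  y ^+ 2 - x ^+ 2 != 0 -> b * y - c * x != 0 ->
  z = (y ^+ 2 - x ^+ 2) / (b * y - c * x) -> g (rsum x y) b c = 0 ->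
  z != 0 /\ rsum z x = c.
Proof.
move=> x0 y0 sqr0 den0 zE g0.
have z0 : z != 0 by rewrite zE mulf_neq0 ?invr_neq0.
have gE : (z ^+ 2 + x ^+ 2 - c * x * z) * (b * y - c * x) ^+ 2 =
          x ^+ 2 * y ^+ 2 * g (rsum x y) b c.
  by rewrite zE /g /rsum; field; apply/and3P.
move: gE; rewrite g0 mulr0 => /eqP; rewrite mulf_eq0 expf_eq0 (negbTE den0) andbF orbF.
move=> /eqP quad0; split=> //; apply/eqP; rewrite -subr_eq0.
have -> : rsum z x - c = (z ^+ 2 + x ^+ 2 - c * x * z) / (x * z).
  by rewrite /rsum; field; apply/andP.
by rewrite quad0 mul0r.
Qed.

Lemma h_rsum {x y z1 z2 : F} : x != 0 -> y != 0 -> z1 != 0 -> z2 != 0 ->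
  h (rsum x y) (rsum z1 x) (rsum z2 x) (rsum z1 y) (rsum z2 y) (rsum z2 z1) = 0.
Proof. by move=> x0 y0 z10 z20; rewrite hE /rsum; field; apply/and4P. Qed.

Lemma h_inj_last {X01 X02 X03 X12 X13 : F} : X01 != 2 -> X01 != -2 ->
  injective (h X01 X02 X03 X12 X13).
Proof.
move=> ne2 neN2 e e' /eqP; rewrite -subr_eq0 !hE.
have -> : forall r s : F, e * r - s - (e' * r - s) = (e - e') * r by move=> *; ring.
have -> : 4 - X01 ^+ 2 = (2 - X01) * (2 + X01) by ring.
rewrite !mulf_eq0 !subr_eq0 addr_eq0 [2 == X01]eq_sym [2 == - _]eq_sym eqr_oppLR.
by rewrite (negbTE ne2) (negbTE neN2) !orbF => /eqP.
Qed.

End RatioSums.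

Section Configuration.
Context {F : fieldType} {T : eqType}.
Variables (a : T -> T -> F) (w : T -> F).

Definition ratio_cond := forall i j, i != j ->
  w i != 0 /\ w j != 0 /\ rsum (w j) (w i) = a i j.

Definition formula_cond i0 i1 := forall i, i != i0 -> i != i1 ->
  a i1 i * w i1 - a i0 i * w i0 != 0 /\
  w i = (w i1 ^+ 2 - w i0 ^+ 2) / (a i1 i * w i1 - a i0 i * w i0).

Lemma formula_condC i0 i1 : formula_cond i0 i1 -> formula_cond i1 i0.
Proof.
move=> fc i i0' i1'; have [den0 wiE] := fc i i1' i0'.
by rewrite -[a i0 i * _ - _]opprB oppr_eq0 -[w i0 ^+ 2 - _]opprB invrN mulrNN.
Qed.

Lemma ratio_cond_formula i0 i1 : w i1 ^+ 2 - w i0 ^+ 2 != 0 ->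
  ratio_cond -> formula_cond i0 i1.
Proof.
move=> sqr0 rc i; rewrite ![i == _]eq_sym => i0' i1'.
have [w0 [wi rs0]] := rc i0 i i0'; have [w1 [_ rs1]] := rc i1 i i1'.
exact: formula_of_rsum.
Qed.

Hypothesis a_sym : forall i j, i != j -> a i j = a j i.
Hypothesis a_g : forall i j k, i != j -> j != k -> i != k ->
  g (a i j) (a j k) (a i k) = 0.
Hypothesis a_h : forall i j k l,
  i != j -> i != k -> i != l -> j != k -> j != l -> k != l ->
  h (a i j) (a i k) (a i l) (a j k) (a j l) (a k l) = 0.

Lemma rsum_of_formula_cond i0 i1 : i0 != i1 -> w i0 != 0 -> w i1 != 0 ->
  rsum (w i0) (w i1) = a i0 i1 -> w i1 ^+ 2 - w i0 ^+ 2 != 0 ->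
  formula_cond i0 i1 ->
  forall i, i != i0 -> i != i1 -> w i != 0 /\ rsum (w i) (w i0) = a i0 i.
Proof.
move=> i01 w0 w1 rs01 sqr0 fc i i0' i1'; have [den0 wiE] := fc i i0' i1'.
apply: rsum_of_formula den0 wiE _ => //.
by rewrite rs01 a_g // eq_sym.
Qed.

Lemma formula_cond_ratio i0 i1 : i0 != i1 -> w i0 != 0 -> w i1 != 0 ->
  rsum (w i0) (w i1) = a i0 i1 -> a i0 i1 != 2 -> a i0 i1 != -2 ->
  formula_cond i0 i1 -> ratio_cond.
Proof.
move=> i01 w0 w1 rs01 ne2 neN2 fc.
have sqr0 : w i1 ^+ 2 - w i0 ^+ 2 != 0 by apply: sqr_sub_neq0_of_rsum; rewrite ?rs01.
have rs0 := rsum_of_formula_cond _ _ i01 w0 w1 rs01 sqr0 fc.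
have rs1 : forall i, i != i1 -> i != i0 -> w i != 0 /\ rsum (w i) (w i1) = a i1 i.
  apply: rsum_of_formula_cond (formula_condC _ _ fc) => //; first by rewrite eq_sym.
    by rewrite rsumC rs01 a_sym.
  by rewrite -opprB oppr_eq0.
have w_neq0 i : w i != 0.
  have [-> //|i0'] := eqVneq i i0; have [-> //|i1'] := eqVneq i i1.
  by case: (rs0 i i0' i1').
have rs_sym i j : j != i -> rsum (w j) (w i) = a i j -> rsum (w i) (w j) = a j i.
  by move=> ji; rewrite rsumC a_sym // eq_sym.
have rs_out i j : j != i -> j != i0 -> j != i1 -> rsum (w j) (w i) = a i j.
  move=> ji j0 j1; have [_ rsj0] := rs0 j j0 j1; have [_ rsj1] := rs1 j j1 j0.
  have [-> //|i0'] := eqVneq i i0; have [-> //|i1'] := eqVneq i i1.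
  have [_ rsi0] := rs0 i i0' i1'; have [_ rsi1] := rs1 i i1' i0'.
  have := h_rsum w0 w1 (w_neq0 i) (w_neq0 j).
  rewrite rs01 rsi0 rsj0 rsi1 rsj1 -(a_h i0 i1 i j) // 1?eq_sym //.
  exact: h_inj_last.
move=> i j ij; split; [exact: w_neq0 | split; [exact: w_neq0 |]]; move: ij.
have [-> ij|j0] := eqVneq j i0.
  have [->|i1'] := eqVneq i i1; first by rewrite rs01 a_sym.
  by apply: (rs_sym _ _ ij); apply: rs_out.
have [-> ij|j1] := eqVneq j i1; last by rewrite eq_sym => /rs_out; apply.
have [->|i0'] := eqVneq i i0; first by rewrite rsumC.
by apply: (rs_sym _ _ ij); apply: rs_out.
Qed.

End Configuration.

Lemma rsum_outside_of_real {F : numFieldType} (x y : F) :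
  x != 0 -> y != 0 -> x / y \is Num.real -> ~~ (-2 < rsum x y < 2).
Proof.
move=> x0 y0 xyR; apply/negP => /andP[gtN2 lt2].
have : 0 < (2 - rsum x y) * (rsum x y - -2) by rewrite mulr_gt0 ?subr_gt0.
have -> : (2 - rsum x y) * (rsum x y - -2) = - (x / y - y / x) ^+ 2.
  by rewrite /rsum; field; apply/andP.
by rewrite oppr_gt0 le_gtF // -realEsqr rpredB // -invf_div rpredV.
Qed.

Section Moduli.
Context {C : numClosedFieldType}.

Lemma real_or_norm_eq_of_rsum {x y : C} : x != 0 -> y != 0 ->
  rsum x y \is Num.real -> x / y \is Num.real \/ `|x| = `|y|.
Proof.
move=> x0 y0; have u0 : x / y != 0 by rewrite mulf_neq0 ?invr_neq0.
rewrite /rsum -[y / x]invf_div; set u := x / y in u0 *.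
move=> /CrealP; rewrite rmorphD fmorphV => conj_eq.
have uc0 : u^* != 0 by rewrite conjC_eq0.
have : (u - u^*) * (u * u^* - 1) = u * u^* * ((u + u^-1) - (u^* + u^*^-1)).
  by field; apply/andP.
rewrite conj_eq subrr mulr0 => /eqP; rewrite mulf_eq0 !subr_eq0 => /orP[/eqP u_conj|].
  by left; apply/CrealP.
rewrite -normCK sqrp_eq1 // => /eqP u1; right.
by rewrite -(divfK y0 x) normrM -/u u1 mul1r.
Qed.

Lemma norm_eq_of_rsum {T : eqType} {w : T -> C} {i0 i1 : T} : i0 != i1 ->
  (forall i, w i != 0) -> (forall i j, i != j -> rsum (w i) (w j) \is Num.real) ->
  -2 < rsum (w i0) (w i1) < 2 -> forall k, `|w k| = `|w i0|.
Proof.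
move=> i01 w_neq0 rsR rs01.
have i10 : i1 != i0 by rewrite eq_sym.
have nR10 : w i1 / w i0 \isn't Num.real.
  by apply: contraTN rs01 => r; rewrite rsumC rsum_outside_of_real.
have [r|n10] := real_or_norm_eq_of_rsum (w_neq0 i1) (w_neq0 i0) (rsR _ _ i10).
  by rewrite r in nR10.
move=> k; have [-> //|k0] := eqVneq k i0; have [-> //|k1] := eqVneq k i1.
have [r0|//] := real_or_norm_eq_of_rsum (w_neq0 k) (w_neq0 i0) (rsR _ _ k0).
have [r1|->//] := real_or_norm_eq_of_rsum (w_neq0 k) (w_neq0 i1) (rsR _ _ k1).
case/negP: nR10; have -> : w i1 / w i0 = (w k / w i0) / (w k / w i1).
  by field; apply/and3P.
by rewrite rpredM ?rpredV.
Qed.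

End Moduli.

Theorem lemma2p4 (R : realType) (d : nat) (hd : (1 <= d)%N)
  (a : 'I_d.+1 -> 'I_d.+1 -> R[i])
  (a_sym : forall i j : 'I_d.+1, i != j -> a i j = a j i)
  (a_g : forall i j k : 'I_d.+1, i != j -> j != k -> i != k ->
           g (a i j) (a j k) (a i k) = 0)
  (a_h : forall i j k l : 'I_d.+1,
           i != j -> i != k -> i != l -> j != k -> j != l -> k != l ->
           h (a i j) (a i k) (a i l) (a j k) (a j l) (a k l) = 0)
  (i0 i1 : 'I_d.+1) (hi01 : (i0 < i1)%N)
  (ha2 : a i0 i1 != 2) (ham2 : a i0 i1 != -2) :
  forall w : 'I_d.+1 -> R[i],
    w i0 != 0 -> w i1 != 0 -> w i0 / w i1 + w i1 / w i0 = a i0 i1 ->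
    let cond1 := forall i j : 'I_d.+1, i != j ->
                   w i != 0 /\ w j != 0 /\ w j / w i + w i / w j = a i j in
    let cond2 := forall i : 'I_d.+1, i != i0 -> i != i1 ->
                   a i1 i * w i1 - a i0 i * w i0 != 0 /\
                   w i = (w i1 ^+ 2 - w i0 ^+ 2) / (a i1 i * w i1 - a i0 i * w i0) in
    (cond1 <-> cond2) /\
    (cond1 ->
     (forall i j : 'I_d.+1, (i < j)%N -> a i j \is Num.real) ->
     -2 < a i0 i1 < 2 ->
     forall i j : 'I_d.+1, (i < j)%N -> `|w i| = `|w j|).
Proof.
move=> w w0 w1 w01 cond1 cond2.
have i01 : i0 != i1 by rewrite neq_ltn hi01.
have sqr0 : w i1 ^+ 2 - w i0 ^+ 2 != 0 by apply: sqr_sub_neq0_of_rsum; rewrite /rsum ?w01.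
split; first split.
- exact: ratio_cond_formula.
- exact: formula_cond_ratio.
move=> rc aR aI; have {}rc : ratio_cond a w := rc.
have w_neq0 i : w i != 0 by have [->|/rc[]] := eqVneq i i0.
have rsR i j : i != j -> rsum (w i) (w j) \is Num.real.
  rewrite neq_ltn => /orP[ij|ji].
    by have [_ [_ rs]] := rc i j (negbT (ltn_eqF ij)); rewrite rsumC rs aR.
  by have [_ [_ rs]] := rc j i (negbT (ltn_eqF ji)); rewrite rs aR.
rewrite -w01 in aI.
have normE := norm_eq_of_rsum i01 w_neq0 rsR aI.
by move=> i j _; rewrite (normE i) (normE j).
Qed.
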